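(* Let $P\in\mathbb{R}^{n_x\times n_x}$ and $R\in\mathbb{R}^{n_z\times n_z}$ be symmetric positive definite, let $H\in\mathbb{R}^{n_z\times n_x}$ have full row rank, and let $\bar x\in\mathbb{R}^{n_x}$, $z\in\mathbb{R}^{n_z}$. Let $x_0$ be a random vector in $\mathbb{R}^{n_x}$ with $\mathbb{E}[x_0]=\bar x$ and $\mathrm{Cov}(x_0)=P$. Define the closed-form update $$x_1=\Phi\,x_0+E\,c,\qquad \Phi=I+E\,\Omega\,F^\top,$$ with $E,F,\Omega,c$ as in the context. Then $$\mathbb{E}[x_1]=\bar x+PH^\top(HPH^\top+R)^{-1}(z-H\bar x),\qquad \mathrm{Cov}(x_1)=\Phi P\Phi^\top=P-PH^\top(HPH^\top+R)^{-1}HP,$$ i.e. the update reproduces the Kalman posterior mean and covariance.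
   Context: $R^{-1/2}$ denotes the inverse of the unique symmetric positive definite square root of $R$. Let $D=R^{-1/2}HPH^\top R^{-1/2}\in\mathbb{R}^{n_z\times n_z}$ (symmetric positive definite), with eigendecomposition $D=V\Lambda V^\top$, $V$ orthogonal, $\Lambda=\mathrm{diag}(\alpha_1,\dots,\alpha_{n_z})$, $\alpha_i>0$. Define $E=PH^\top R^{-1/2}V\in\mathbb{R}^{n_x\times n_z}$, $F^\top=V^\top R^{-1/2}H\in\mathbb{R}^{n_z\times n_x}$, $\tilde z=V^\top R^{-1/2}z$, $\tilde x=F^\top\bar x$. Let $\Omega=\mathrm{diag}(\omega_1,\dots,\omega_{n_z})$ with $\omega_i=\big((1+\alpha_i)^{-1/2}-1\big)/\alpha_i$, and $c\in\mathbb{R}^{n_z}$ with $c_i=\dfrac{\alpha_i\tilde z_i+\tilde x_i(1-\sqrt{1+\alpha_i})}{\alpha_i(1+\alpha_i)}$. *)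

From HB Require Import structures.
From mathcomp Require Import all_boot all_order all_algebra.
From mathcomp Require Import all_classical all_reals all_analysis.
Set Implicit Arguments. Unset Strict Implicit. Unset Printing Implicit Defensive.
Import Order.TTheory GRing.Theory Num.Theory.
Local Open Scope ring_scope.

Definition spd (R : realType) (n : nat) (A : 'M[R]_n) : Prop :=
  A^T = A /\ forall v : 'cV[R]_n, v != 0 -> 0 < (v^T *m A *m v) 0 0.

Definition rv_comp (T : Type) (R : realType) (n : nat)
  (x : T -> 'cV[R]_n) (i : 'I_n) : T -> R := fun w => x w i 0.

Definition L2_rvec d (T : measurableType d) (R : realType)
  (Pr : probability T R) (n : nat) (x : T -> 'cV[R]_n) : Prop :=
  forall i, rv_comp x i \in Lfun Pr 2.

Definition rv_mean d (T : measurableType d) (R : realType)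
  (Pr : probability T R) (n : nat) (x : T -> 'cV[R]_n) : 'cV[R]_n :=
  \col_i fine ('E_Pr[rv_comp x i])%E.

Definition rv_cov d (T : measurableType d) (R : realType)
  (Pr : probability T R) (n : nat) (x : T -> 'cV[R]_n) : 'M[R]_n :=
  \matrix_(i, j) fine (covariance Pr (rv_comp x i) (rv_comp x j)).

From HB Require Import structures.
From mathcomp Require Import all_boot all_order all_algebra.
From mathcomp Require Import all_classical all_reals all_analysis.
From mathcomp Require Import ring.
Set Implicit Arguments. Unset Strict Implicit. Unset Printing Implicit Defensive.
Import Order.TTheory GRing.Theory Num.Theory.
Local Open Scope ring_scope.

(* Whitening by R^{-1/2} and rotating by V turns the innovation covariance into
   H P H^T + R = R^{1/2} V (I + Λ) V^T R^{1/2}, so the Kalman gain is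
   K = E (I + Λ)^{-1} V^T R^{-1/2}. Since E = P F and
   F^T P F = Λ, the update Φ = I + E Ω F^T satisfies
   Φ P Φ^T = P + E (2Ω + ΩΛΩ) E^T, and each ω_i is the root of
   2ω + α_i ω^2 = -1/(1 + α_i), giving P - E (I + Λ)^{-1} E^T = P - K H P; the
   shift c is chosen so that the means agree as well. The moments of x1 then follow
   from linearity of expectation and bilinearity of covariance under the affine
   map x0 ↦ Φ x0 + E c. *)

Section KalmanScalars.
Variable R : rcfType.

Definition kalman_omega (a : R) : R := ((Num.sqrt (1 + a))^-1 - 1) / a.

Definition kalman_shift (a y x : R) : R :=
  (a * y + x * (1 - Num.sqrt (1 + a))) / (a * (1 + a)).

Variable a : R.
Hypothesis a_gt0 : 0 < a.

Let s := Num.sqrt (1 + a).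

Let s_neq0 : s != 0. Proof. by rewrite gt_eqF // sqrtr_gt0 addr_gt0. Qed.

Let a_def : a = s ^+ 2 - 1.
Proof. by rewrite sqr_sqrtr ?addr_ge0 ?ltW // addrC addKr. Qed.

Let a_neq0 : s ^+ 2 - 1 != 0. Proof. by rewrite -a_def gt_eqF. Qed.

Let a1_neq0 : 1 + (s ^+ 2 - 1) != 0. Proof. by rewrite addrC subrK expf_neq0. Qed.

Lemma kalman_omega_quadratic :
  let w := kalman_omega a in w + w + w * a * w = - (1 + a)^-1.
Proof. by rewrite /= /kalman_omega -/s a_def; field; rewrite s_neq0 a_neq0 a1_neq0. Qed.

Lemma kalman_omega_shift (y x : R) :
  kalman_omega a * x + kalman_shift a y x = (1 + a)^-1 * (y - x).
Proof. by rewrite /kalman_omega /kalman_shift -/s a_def; field; rewrite s_neq0 a_neq0 a1_neq0. Qed.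

End KalmanScalars.

Section AffineMoments.
Context d (T : measurableType d) (R : realType) (Pr : probability T R).

Lemma Lfun2_Lfun1 {f : T -> R} : f \in Lfun Pr 2%:E -> f \in Lfun Pr 1.
Proof. exact/Lfun_subset12/fin_num_measure. Qed.

Lemma Lfun_lincomb (I : Type) (r : seq I) (p : R) (a : I -> R) (X : I -> T -> R) :
  1 <= p -> (forall j, X j \in Lfun Pr p%:E) ->
  \sum_(j <- r) a j \o* X j \in Lfun Pr p%:E.
Proof. by move=> p1 Xp; apply: rpred_sum => j _; apply: Lfun_scale. Qed.

Lemma expectation_lincomb (I : Type) (r : seq I) (a : I -> R) (X : I -> T -> R) :
  (forall j, X j \in Lfun Pr 1) ->
  ('E_Pr[\sum_(j <- r) a j \o* X j] = (\sum_(j <- r) a j * fine 'E_Pr[X j])%:E)%E.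
Proof.
move=> X1; elim: r => [|j r IHr]; first by rewrite !big_nil expectation_cst.
rewrite !big_cons expectationD ?Lfun_scale ?Lfun_lincomb //.
by rewrite expectationZl // IHr EFinD EFinM fineK // expectation_fin_num.
Qed.

Lemma covariance_lincomb_l (I : Type) (r : seq I) (a : I -> R) (X : I -> T -> R)
    (Y : T -> R) :
  (forall j, X j \in Lfun Pr 2%:E) -> Y \in Lfun Pr 2%:E ->
  covariance Pr (\sum_(j <- r) a j \o* X j) Y =
  ((\sum_(j <- r) a j * fine (covariance Pr (X j) Y))%:E)%E.
Proof.
move=> X2 Y2; elim: r => [|j r IHr].
  by rewrite !big_nil -[0]/(cst 0) covariance_cst_l.
have X1 := Lfun2_Lfun1 (X2 j); have Y1 := Lfun2_Lfun1 Y2.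
have XY1 := Lfun2_mul_Lfun1 (X2 j) Y2.
rewrite !big_cons covarianceDl ?Lfun_scale ?Lfun_lincomb ?ler1n //.
by rewrite covarianceZl // IHr EFinD EFinM fineK // covariance_fin_num.
Qed.

Lemma rv_comp_affine m n (A : 'M[R]_(m, n)) (b : 'cV[R]_m) (x : T -> 'cV[R]_n) i :
  rv_comp (fun w => A *m x w + b) i = \sum_j A i j \o* rv_comp x j \+ cst (b i 0).
Proof.
apply/funext => w; rewrite /rv_comp /= fct_sumE !mxE; congr (_ + _).
by apply: eq_bigr => j _; rewrite /= mulrC.
Qed.

Lemma rv_mean_affine m n (A : 'M[R]_(m, n)) (b : 'cV[R]_m) (x : T -> 'cV[R]_n) :
  (forall i, rv_comp x i \in Lfun Pr 1) ->
  rv_mean Pr (fun w => A *m x w + b) = A *m rv_mean Pr x + b.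
Proof.
move=> x1; apply/matrixP => i k; rewrite (ord1 k) !mxE rv_comp_affine.
rewrite expectationD ?Lfun_lincomb ?Lfun_cst // expectation_lincomb //.
by rewrite expectation_cst /=; congr (_ + _); apply: eq_bigr => j _; rewrite mxE.
Qed.

Lemma rv_cov_affine m n (A : 'M[R]_(m, n)) (b : 'cV[R]_m) (x : T -> 'cV[R]_n) :
  L2_rvec Pr x -> rv_cov Pr (fun w => A *m x w + b) = A *m rv_cov Pr x *m A^T.
Proof.
move=> x2.
have affine_cov k Y : Y \in Lfun Pr 2%:E ->
    covariance Pr (rv_comp (fun w => A *m x w + b) k) Y =
    ((\sum_j A k j * fine (covariance Pr (rv_comp x j) Y))%:E)%E.
  move=> Y2; rewrite rv_comp_affine covarianceDl ?Lfun_lincomb ?Lfun_cst ?ler1n //.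
  by rewrite covariance_cst_l adde0 covariance_lincomb_l.
have y2 k : rv_comp (fun w => A *m x w + b) k \in Lfun Pr 2%:E.
  rewrite rv_comp_affine; apply: rpredD; rewrite ?lee_fin ?ler1n // => ?.
    by apply: Lfun_lincomb; rewrite ?ler1n.
  exact: Lfun_cst.
apply/matrixP => i k; rewrite !mxE affine_cov //=.
under eq_bigr => j _ do rewrite covarianceC affine_cov //= mulr_sumr.
rewrite exchange_big /=; apply: eq_bigr => l _.
rewrite !mxE mulr_suml; apply: eq_bigr => j _.
by rewrite /rv_cov mxE covarianceC [A k l * _]mulrC mulrA.
Qed.

End AffineMoments.

Lemma spd_unitmx (R : realType) n (A : 'M[R]_n) : spd A -> A \in unitmx.
Proof.
case=> _ A_pos; rewrite -row_free_unit -kermx_eq0.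
apply/eqP/row_matrixP => i; rewrite row0; apply/eqP/negPn/negP => ker_i.
set u := row i (kermx A) in ker_i.
have ut_neq0 : u^T != 0 by rewrite -trmx0 (inj_eq (@trmx_inj _ _ _)).
by have := A_pos _ ut_neq0; rewrite trmxK /u -row_mul mulmx_ker row0 mul0mx mxE ltxx.
Qed.

Lemma invmx_whitened_sum (R : fieldType) m (S V M : 'M[R]_m) (alpha : 'I_m -> R) :
    S \in unitmx -> V^T *m V = 1%:M ->
    invmx S *m M *m invmx S = V *m diag_mx (\row_i alpha i) *m V^T ->
    (forall i, 1 + alpha i != 0) ->
  invmx (M + S *m S) =
  invmx S *m V *m diag_mx (\row_i (1 + alpha i)^-1) *m V^T *m invmx S.
Proof.
move=> S_unit VtV M_diag alpha1_neq0.
set L := diag_mx (\row_i alpha i) in M_diag; set Lp := diag_mx _.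
have VVt : V *m V^T = 1%:M := mulmx1C VtV.
have L1Lp : (L + 1%:M) *m Lp = 1%:M.
  apply/matrixP => i j; rewrite mul_mx_diag !mxE.
  by case: eqVneq => [->|_]; rewrite ?mulr0n ?addr0 ?mul0r // mulr1n addrC mulfV.
have M_eq : M = S *m (V *m L *m V^T) *m S.
  by rewrite -M_diag !mulmxA mulmxV // mul1mx mulmxKV.
have sum_eq : M + S *m S = S *m V *m (L + 1%:M) *m V^T *m S.
  rewrite M_eq (_ : S *m S = S *m (V *m V^T) *m S); last by rewrite VVt mulmx1.
  by rewrite !mulmxDr !mulmxDl !mulmx1 !mulmxA.
have inv_eq : (M + S *m S) *m (invmx S *m V *m Lp *m V^T *m invmx S) = 1%:M.
  rewrite sum_eq !mulmxA mulmxK // -(mulmxA _ V^T V) VtV mulmx1.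
  by rewrite -(mulmxA _ _ Lp) L1Lp mulmx1 -(mulmxA _ V) VVt mulmx1 mulmxV.
have [sum_unit _] := mulmx1_unit inv_eq.
by rewrite -[RHS]mul1mx -(mulVmx sum_unit) -mulmxA inv_eq mulmx1.
Qed.

Section SquareRootUpdate.
Variables (R : rcfType) (m n : nat) (alpha : 'I_m -> R).
Hypothesis alpha_gt0 : forall i, 0 < alpha i.

Local Notation L := (diag_mx (\row_i alpha i)).
Local Notation Om := (diag_mx (\row_i kalman_omega (alpha i))).
Local Notation Lp := (diag_mx (\row_i (1 + alpha i)^-1)).

Lemma kalman_omega_mx_quadratic : Om + Om + Om *m L *m Om = - Lp.
Proof.
rewrite !mulmx_diag; apply/matrixP => i j; rewrite !mxE.
case: eqVneq => [->|_]; last by rewrite !mulr0n !addr0 oppr0.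
by rewrite !mulr1n kalman_omega_quadratic.
Qed.

Variables (E : 'M[R]_(n, m)) (Ft : 'M[R]_(m, n)).

Lemma sqrt_update_mean (xbar : 'cV[R]_n) (zt : 'cV[R]_m) :
  let xt := Ft *m xbar in
  let c := \col_i kalman_shift (alpha i) (zt i 0) (xt i 0) in
  (1%:M + E *m Om *m Ft) *m xbar + E *m c = xbar + E *m Lp *m (zt - xt).
Proof.
move=> xt c; rewrite mulmxDl mul1mx -addrA -!mulmxA -mulmxDr; congr (_ + _ *m _).
apply/matrixP => i k; rewrite (ord1 k) !mul_diag_mx !mxE.
exact: kalman_omega_shift.
Qed.

Variable P : 'M[R]_n.
Hypotheses (P_sym : P^T = P) (PFt : P *m Ft^T = E)
  (FtPF : Ft *m P *m Ft^T = L).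

Lemma sqrt_update_cov :
  let Phi := 1%:M + E *m Om *m Ft in Phi *m P *m Phi^T = P - E *m Lp *m E^T.
Proof.
have FtP : Ft *m P = E^T by rewrite -PFt trmx_mul trmxK P_sym.
have EtFt : E^T *m Ft^T = L by rewrite -FtP.
have tr_Om : Om^T = Om by rewrite tr_diag_mx.
rewrite /= -[Lp]opprK -kalman_omega_mx_quadratic mulmxN mulNmx opprK.
rewrite linearD /= trmx1 !trmx_mul tr_Om.
rewrite !mulmxDl !mulmxDr !mul1mx !mulmx1 !mulmxA PFt -!(mulmxA _ Ft P) FtP.
by rewrite -(mulmxA _ E^T) EtFt !mulmxDl !addrA.
Qed.

End SquareRootUpdate.

Theorem theorem1 (R : realType) (nx nz : nat)
  (P : 'M[R]_nx) (Rm : 'M[R]_nz) (H : 'M[R]_(nz, nx))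
  (xbar : 'cV[R]_nx) (z : 'cV[R]_nz)
  (d : measure_display) (T : measurableType d) (Pr : probability T R)
  (x0 : T -> 'cV[R]_nx)
  (Rsq : 'M[R]_nz) (V : 'M[R]_nz) (alpha : 'I_nz -> R) :
  spd P -> spd Rm -> \rank H = nz ->
  L2_rvec Pr x0 -> rv_mean Pr x0 = xbar -> rv_cov Pr x0 = P ->
  spd Rsq -> Rsq *m Rsq = Rm ->
  let Rmh := invmx Rsq in
  let D := Rmh *m H *m P *m H^T *m Rmh in
  V^T *m V = 1%:M ->
  D = V *m diag_mx (\row_i alpha i) *m V^T ->
  (forall i, 0 < alpha i) ->
  let E := P *m H^T *m Rmh *m V in
  let Ft := V^T *m Rmh *m H in
  let zt := V^T *m Rmh *m z in
  let xt := Ft *m xbar in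
  let Om := diag_mx (\row_i (((Num.sqrt (1 + alpha i))^-1 - 1) / alpha i)) in
  let c := \col_i ((alpha i * zt i 0 + xt i 0 * (1 - Num.sqrt (1 + alpha i)))
                    / (alpha i * (1 + alpha i))) in
  let Phi := 1%:M + E *m Om *m Ft in
  let x1 := fun w => Phi *m x0 w + E *m c in
  let K := P *m H^T *m invmx (H *m P *m H^T + Rm) in
  rv_mean Pr x1 = xbar + K *m (z - H *m xbar) /\
  rv_cov Pr x1 = Phi *m P *m Phi^T /\
  Phi *m P *m Phi^T = P - K *m H *m P.
Proof.
move=> [P_sym _] _ _ x0_L2 x0_mean x0_cov Rsq_spd Rsq2 Rmh D VtV D_diag alpha_gt0.
move=> E Ft zt xt Om c Phi x1 K.
have Rmh_sym : Rmh^T = Rmh by rewrite /Rmh trmx_inv; case: Rsq_spd => ->.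
have PFt : P *m Ft^T = E by rewrite /Ft /E !trmx_mul trmxK Rmh_sym !mulmxA.
have FtP : Ft *m P = E^T by rewrite -PFt trmx_mul trmxK P_sym.
have FtPF : Ft *m P *m Ft^T = diag_mx (\row_i alpha i).
  rewrite -mulmxA PFt (_ : Ft *m E = V^T *m D *m V); last by rewrite /D !mulmxA.
  by rewrite D_diag !mulmxA VtV mul1mx -mulmxA VtV mulmx1.
have K_eq : K = E *m diag_mx (\row_i (1 + alpha i)^-1) *m V^T *m Rmh.
  rewrite /K -Rsq2 (invmx_whitened_sum (spd_unitmx Rsq_spd) VtV (alpha := alpha)).
  - by rewrite /E !mulmxA.
  - by rewrite -D_diag /D !mulmxA.
  - by move=> i; rewrite gt_eqF ?addr_gt0.
split.
  rewrite /x1 rv_mean_affine => [|i]; last exact: Lfun2_Lfun1.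
  have -> : K *m (z - H *m xbar) = E *m diag_mx (\row_i (1 + alpha i)^-1) *m (zt - xt).
    by rewrite K_eq !mulmxBr /zt /xt /Ft !mulmxA.
  by rewrite x0_mean; exact: sqrt_update_mean.
split; first by rewrite /x1 rv_cov_affine // x0_cov.
have -> : K *m H *m P = E *m diag_mx (\row_i (1 + alpha i)^-1) *m E^T.
  by rewrite K_eq -FtP /Ft !mulmxA.
exact: sqrt_update_cov.
Qed.
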